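(* Let $\mu>1$, $\gamma=\mu\gamma_1^N$, $0<\alpha<1/4$, $\rho_k=4k^\alpha$. Define, for $z\in\widehat{\mathbb{R}}^N$, $$R(z)=\widetilde G_N(z)+\tfrac14-(z_0+1)^2-\tfrac12\sum_{k=1}^{N-1}\nu_{k,N}|z_k|^2.$$ There exist constants $A_9<\infty$ and $\delta_0>0$ such that for all $N\ge3$, all $0<\delta<\delta_0$ and all $z\in C_\delta(I_-)$, $|R(z)|\le A_9\delta^3$, where $C_\delta(I_-)=\{z\in\widehat{\mathbb{R}}^N:|z_0+1|\le\delta/\sqrt2,\ |z_k|\le\delta r_{k,N}/\sqrt{\nu_{k,N}}\ \text{for }1\le k\le N-1\}$.
   Context: Indices modulo $N$; $F_{\gamma,N}(x)=\sum_{i=0}^{N-1}(\tfrac14x_i^4-\tfrac12x_i^2)+\tfrac\gamma4\sum_{i=0}^{N-1}(x_i-x_{i+1})^2$; $\gamma_1^N=\frac1{2\sin^2(\pi/N)}$; $G_N=N^{-1}F_{\gamma,N}$; $\lambda_{k,N}=-1+2\gamma\sin^2(k\pi/N)$ and $\nu_{k,N}=\lambda_{k,N}+3$ (eigenvalues of $\nabla^2F_{\gamma,N}$ at $I_\pm=\pm(1,\dots,1)$; $\nu_{0,N}=2$). $\omega=e^{2\pi i/N}$; $\widehat{\mathbb{R}}^N=\{z\in\mathbb{C}^N:z_k=\overline{z_{N-k}}\}$; $x_j(Nz)=\sum_k\omega^{jk}z_k$; $\widetilde G_N(z)=G_N(x(Nz))$; in these coordinates $I_-$ corresponds to $z=(-1,0,\dots,0)$.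 $r_{k,N}=r_{N-k,N}=\rho_k$ for $1\le k\le\lfloor N/2\rfloor$. *)

From Stdlib Require Export Reals Lra Lia.
Open Scope R_scope.

Fixpoint rsum (n : nat) (f : nat -> R) : R :=
  match n with
  | O => 0
  | S m => rsum m f + f m
  end.

Definition gamma1 (N : nat) : R := / (2 * (sin (PI / INR N)) ^ 2).

Definition F (gamma : R) (N : nat) (x : nat -> R) : R :=
  rsum N (fun i => / 4 * x i ^ 4 - / 2 * x i ^ 2)
  + gamma / 4 * rsum N (fun i => (x i - x ((i + 1) mod N)%nat) ^ 2).

Definition G (gamma : R) (N : nat) (x : nat -> R) : R := / INR N * F gamma N x.

Definition lam (gamma : R) (k N : nat) : R := -1 + 2 * gamma * (sin (INR k * PI / INR N)) ^ 2.
Definition nu (gamma : R) (k N : nat) : R := lam gamma k N + 3.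

(* A complex vector z in C^N is represented by its real parts a and imaginary
   parts b (z_k = a k + i b k, for 0 <= k < N). Membership in widehat R^N: *)
Definition hatR (N : nat) (a b : nat -> R) : Prop :=
  b 0%nat = 0 /\
  forall k, (1 <= k <= N - 1)%nat -> a k = a (N - k)%nat /\ b k = - b (N - k)%nat.

(* x_j(Nz) = sum_k omega^{jk} z_k, omega = e^{2 pi i/N}; its real part
   (it is real when z is in hatR). *)
Definition xofz (N : nat) (a b : nat -> R) (j : nat) : R :=
  rsum N (fun k => a k * cos (2 * PI * INR (j * k) / INR N)
                 - b k * sin (2 * PI * INR (j * k) / INR N)).

Definition Gt (gamma : R) (N : nat) (a b : nat -> R) : R := G gamma N (xofz N a b).

Definition cabs2 (a b : nat -> R) (k : nat) : R := a k ^ 2 + b k ^ 2.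

(* rho_k = 4 k^alpha; r_{k,N} = r_{N-k,N} = rho_k for 1 <= k <= floor(N/2) *)
Definition rho (alpha : R) (k : nat) : R := 4 * Rpower (INR k) alpha.
Definition rr (alpha : R) (k N : nat) : R := rho alpha (Nat.min k (N - k)).

Definition Rem (gamma : R) (N : nat) (a b : nat -> R) : R :=
  Gt gamma N a b + / 4 - (a 0%nat + 1) ^ 2
  - / 2 * rsum N (fun k => if (k =? 0)%nat then 0 else nu gamma k N * cabs2 a b k).

Definition Cdelta (gamma alpha delta : R) (N : nat) (a b : nat -> R) : Prop :=
  hatR N a b /\
  Rabs (a 0%nat + 1) <= delta / sqrt 2 /\
  forall k, (1 <= k <= N - 1)%nat ->
    sqrt (cabs2 a b k) <= delta * rr alpha k N / sqrt (nu gamma k N).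

(* Write y_j = x_j(Nz) + 1 for the transform of z - I_-.  The on-site potential
   expands as x^4/4 - x^2/2 = -1/4 + y^2 - y^3 + y^4/4, and by Parseval's identity
   the quadratic terms, together with the nearest-neighbour coupling (whose Fourier
   multiplier is 4 sin^2(k pi/N)), cancel exactly against (z_0+1)^2 + 1/2 sum nu_k |z_k|^2:
       R(z) = (1/N) sum_j (-y_j^3 + y_j^4/4)              [remainder_identity].
   By Young's inequality it then suffices that (1/N) sum_j y_j^4 = O(delta^4).
   On C_delta(I_-) we have nu_k >= min(k,N-k)^2/9 [nu_lower_bound], so with q = 2^alpha
   the coefficients satisfy |z_k| <= 12 delta q^(m+1)/2^m on the dyadic block
   2^m <= min(k,N-k) < 2^(m+1).  For such coefficients the partial sums S_m over the
   frequencies below 2^m are bounded in sup norm by O(q^m) and their increments have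
   energy O(q^(2m)/2^m), so the increments of S_m^2 decay in L^2 like (q^4/2)^m; this is
   summable exactly because alpha < 1/4, and weighted Cauchy-Schwarz yields the fourth
   moment bound [dyadic_L4_bound]. *)

From Stdlib Require Import Reals Lra Lia Psatz.
Open Scope R_scope.

Lemma rsum_ext n f g : (forall k, (k < n)%nat -> f k = g k) -> rsum n f = rsum n g.
Proof.
  induction n as [|n IH]; intros H; simpl; [reflexivity|].
  rewrite IH by (intros; apply H; lia). rewrite H by lia. reflexivity.
Qed.

Lemma rsum_plus n f g : rsum n (fun k => f k + g k) = rsum n f + rsum n g.
Proof. induction n; simpl; [lra|]. rewrite IHn; lra. Qed.

Lemma rsum_minus n f g : rsum n (fun k => f k - g k) = rsum n f - rsum n g.
Proof. induction n; simpl; [lra|]. rewrite IHn; lra. Qed.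

Lemma rsum_scal n c f : rsum n (fun k => c * f k) = c * rsum n f.
Proof. induction n; simpl; [lra|]. rewrite IHn; lra. Qed.

Lemma rsum_const n c : rsum n (fun _ => c) = INR n * c.
Proof. induction n; simpl rsum; [simpl; lra|]. rewrite IHn, S_INR; lra. Qed.

Lemma rsum_zero n : rsum n (fun _ => 0) = 0.
Proof. rewrite rsum_const; ring. Qed.

Lemma rsum_le n f g : (forall k, (k < n)%nat -> f k <= g k) -> rsum n f <= rsum n g.
Proof.
  induction n as [|n IH]; intros H; simpl; [lra|].
  assert (f n <= g n) by (apply H; lia).
  assert (rsum n f <= rsum n g) by (apply IH; intros; apply H; lia). lra.
Qed.

Lemma rsum_nonneg n f : (forall k, (k < n)%nat -> 0 <= f k) -> 0 <= rsum n f.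
Proof. intros H. rewrite <- (rsum_zero n). apply rsum_le; auto. Qed.

Lemma rsum_abs n f : Rabs (rsum n f) <= rsum n (fun k => Rabs (f k)).
Proof.
  induction n; simpl; [rewrite Rabs_R0; lra|].
  eapply Rle_trans; [apply Rabs_triang|]. lra.
Qed.

Lemma rsum_swap n m (f : nat -> nat -> R) :
  rsum n (fun i => rsum m (fun j => f i j)) = rsum m (fun j => rsum n (fun i => f i j)).
Proof.
  induction n; simpl; [symmetry; apply rsum_zero|].
  rewrite IHn, <- rsum_plus. reflexivity.
Qed.

Lemma rsum_mult n m f g :
  rsum n f * rsum m g = rsum n (fun i => rsum m (fun j => f i * g j)).
Proof.
  induction n; simpl; [lra|].
  rewrite Rmult_plus_distr_r, IHn, <- rsum_scal. reflexivity.
Qed.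

Lemma rsum_shift n f : rsum (S n) f = f 0%nat + rsum n (fun k => f (S k)).
Proof. induction n; simpl; [lra|]. simpl in IHn. rewrite IHn. lra. Qed.

Lemma rsum_rev n f : rsum n f = rsum n (fun k => f (n - 1 - k)%nat).
Proof.
  induction n; [reflexivity|].
  rewrite (rsum_shift n (fun k => f (S n - 1 - k)%nat)).
  change (rsum (S n) f) with (rsum n f + f n). rewrite IHn.
  replace (S n - 1 - 0)%nat with n by lia. rewrite Rplus_comm. f_equal.
  apply rsum_ext; intros. f_equal. lia.
Qed.

Lemma rsum_telescope n g : rsum n (fun k => g (S k) - g k) = g n - g 0%nat.
Proof. induction n; simpl; [lra|]. rewrite IHn; lra. Qed.

(* Splitting off the zeroth term, written as in the definition of [Rem]. *)
Lemma rsum_split0 n f : (1 <= n)%nat ->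
  rsum n f = f 0%nat + rsum n (fun k => if (k =? 0)%nat then 0 else f k).
Proof. intros H. destruct n; [lia|]. rewrite !rsum_shift. simpl. lra. Qed.

Lemma rsum_delta n k (c : nat -> R) : (k < n)%nat ->
  rsum n (fun l => if (k =? l)%nat then c l else 0) = c k.
Proof.
  induction n; intros H; [lia|]. simpl.
  destruct (Nat.eq_dec k n) as [->|Hne].
  - rewrite Nat.eqb_refl, (rsum_ext _ _ (fun _ => 0)), rsum_zero; [lra|].
    intros l Hl. destruct (Nat.eqb_spec n l); [lia|auto].
  - rewrite IHn by lia. destruct (Nat.eqb_spec k n); [lia|lra].
Qed.

Lemma weighted_cauchy_schwarz n (x w : nat -> R) :
  (forall k, (k < n)%nat -> 0 < w k) ->
  (rsum n x) ^ 2 <= rsum n w * rsum n (fun k => x k ^ 2 / w k).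
Proof.
  induction n as [|n IH]; intros Hw; [simpl; lra|]. cbn [rsum].
  assert (IHn := IH (fun k Hk => Hw k ltac:(lia))).
  set (X := rsum n x) in *. set (W := rsum n w) in *.
  set (T := rsum n (fun k => x k ^ 2 / w k)) in *.
  assert (Hv : 0 < w n) by (apply Hw; lia).
  assert (HW : 0 <= W) by (apply rsum_nonneg; intros; left; apply Hw; lia).
  set (y := x n). set (v := w n) in *.
  (* the cross term 2 X y is controlled by AM-GM with weights W, v *)
  assert (Hcross : 2 * X * y <= W * (y ^ 2 / v) + v * T).
  { set (u := y / v). replace y with (u * v) by (unfold u; field; lra).
    replace ((u * v) ^ 2 / v) with (u ^ 2 * v) by (field; lra).
    destruct (Req_dec W 0) as [HW0|HW0].
    - assert (HX : X = 0) by (rewrite HW0 in IHn; nra).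
      assert (0 <= T).
      { apply rsum_nonneg; intros k Hk. apply Rmult_le_pos; [nra|].
        left; apply Rinv_0_lt_compat, Hw; lia. }
      rewrite HX, HW0. nra.
    - assert (0 <= W * u ^ 2 - 2 * X * u + T).
      { apply (Rmult_le_reg_l W); [lra|]. assert (0 <= (W * u - X) ^ 2) by apply pow2_ge_0. nra. }
      nra. }
  assert (y ^ 2 = v * (y ^ 2 / v)) by (field; lra).
  replace ((X + y) ^ 2) with (X ^ 2 + 2 * X * y + y ^ 2) by ring. nra.
Qed.

Lemma geometric_sum_bound n r : 0 <= r < 1 -> rsum n (fun k => r ^ k) <= / (1 - r).
Proof.
  intros Hr.
  assert (E : rsum n (fun k => r ^ k) = (1 - r ^ n) / (1 - r)).
  { induction n; simpl; [field; lra|]. rewrite IHn. field. lra. }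
  rewrite E. assert (0 <= r ^ n) by (apply pow_le; lra).
  apply (Rmult_le_reg_r (1 - r)); [lra|]. field_simplify; lra.
Qed.

(** The discrete Fourier transform on Z/NZ. *)

Definition theta (N j k : nat) : R := 2 * PI * INR (j * k) / INR N.

(* Imaginary part of x(Nz); together with [xofz] it is the full inverse transform. *)
Definition yofz (N : nat) (a b : nat -> R) (j : nat) : R :=
  rsum N (fun k => a k * sin (theta N j k) + b k * cos (theta N j k)).

Lemma xofz_theta N a b j :
  xofz N a b j = rsum N (fun k => a k * cos (theta N j k) - b k * sin (theta N j k)).
Proof. reflexivity. Qed.

Lemma sin_period_int x p : sin (x + 2 * PI * INR p) = sin x.
Proof. rewrite <- (sin_period x p). f_equal; ring. Qed.

Lemma cos_period_int x p : cos (x + 2 * PI * INR p) = cos x.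
Proof. rewrite <- (cos_period x p). f_equal; ring. Qed.

Lemma sin_reflect x p : sin (2 * PI * INR p - x) = - sin x.
Proof. replace (2 * PI * INR p - x) with (- x + 2 * PI * INR p) by ring.
  rewrite sin_period_int, sin_neg; ring. Qed.

Lemma cos_reflect x p : cos (2 * PI * INR p - x) = cos x.
Proof. replace (2 * PI * INR p - x) with (- x + 2 * PI * INR p) by ring.
  rewrite cos_period_int, cos_neg; ring. Qed.

Lemma theta_0 N j : theta N j 0 = 0.
Proof. unfold theta. rewrite Nat.mul_0_r. simpl. unfold Rdiv. ring. Qed.

Lemma theta_diff N j k l : (l <= k)%nat -> (0 < N)%nat ->
  theta N j k - theta N j l = INR j * (2 * PI * INR (k - l) / INR N).
Proof.
  intros H HN. unfold theta. rewrite !mult_INR, minus_INR by lia.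
  assert (0 < INR N) by (apply lt_0_INR; lia). field; lra.
Qed.

Lemma theta_reflect N j k : (k <= N)%nat -> (0 < N)%nat ->
  theta N j (N - k) = 2 * PI * INR j - theta N j k.
Proof.
  intros H HN. unfold theta. rewrite !mult_INR, minus_INR by lia.
  assert (0 < INR N) by (apply lt_0_INR; lia). field; lra.
Qed.

(* Sums of a nontrivial character vanish: multiplying by 2 sin(t/2) telescopes. *)
Lemma character_sum_zero N p : (0 < p < N)%nat ->
  rsum N (fun j => cos (INR j * (2 * PI * INR p / INR N))) = 0 /\
  rsum N (fun j => sin (INR j * (2 * PI * INR p / INR N))) = 0.
Proof.
  intros Hp. set (t := 2 * PI * INR p / INR N).
  assert (HN : 0 < INR N) by (apply lt_0_INR; lia).
  assert (Hs : sin (t / 2) <> 0).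
  { assert (0 < INR p) by (apply lt_0_INR; lia).
    assert (INR p < INR N) by (apply lt_INR; lia).
    assert (HPI := PI_RGT_0).
    assert (Hr : INR p / INR N < 1) by (apply (Rmult_lt_reg_r (INR N)); [lra|]; field_simplify; lra).
    assert (0 < INR p / INR N) by (apply Rdiv_lt_0_compat; lra).
    replace (t / 2) with (PI * (INR p / INR N)) by (unfold t; field; lra).
    apply Rgt_not_eq, sin_gt_0; nra. }
  assert (Hper : INR N * t - t / 2 = - (t / 2) + 2 * PI * INR p) by (unfold t; field; lra).
  split; apply (Rmult_eq_reg_l (2 * sin (t / 2))); try lra;
    rewrite Rmult_0_r, <- rsum_scal.
  - rewrite (rsum_ext _ _ (fun j => sin (INR (S j) * t - t / 2) - sin (INR j * t - t / 2))).
    + rewrite (rsum_telescope N (fun j => sin (INR j * t - t / 2))), Hper, sin_period_int.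
      simpl INR. replace (0 * t - t / 2) with (- (t / 2)) by ring. ring.
    + intros j _. rewrite S_INR.
      replace ((INR j + 1) * t - t / 2) with (INR j * t + t / 2) by field.
      rewrite sin_plus, sin_minus. ring.
  - rewrite (rsum_ext _ _ (fun j => (-1) * (cos (INR (S j) * t - t / 2) - cos (INR j * t - t / 2)))).
    + rewrite rsum_scal, (rsum_telescope N (fun j => cos (INR j * t - t / 2))), Hper, cos_period_int.
      simpl INR. replace (0 * t - t / 2) with (- (t / 2)) by ring. ring.
    + intros j _. rewrite S_INR.
      replace ((INR j + 1) * t - t / 2) with (INR j * t + t / 2) by field.
      rewrite cos_plus, cos_minus. ring.
Qed.

Lemma modes_orthogonal N k l : (k < N)%nat -> (l < N)%nat ->
  rsum N (fun j => cos (theta N j k - theta N j l)) = (if (k =? l)%nat then INR N else 0) /\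
  rsum N (fun j => sin (theta N j k - theta N j l)) = 0.
Proof.
  intros Hk Hl. destruct (Nat.eqb_spec k l) as [->|Hne].
  - rewrite (rsum_ext _ _ (fun _ => 1)), (rsum_ext _ (fun j => sin _) (fun _ => 0)).
    + rewrite rsum_const, rsum_zero. split; ring.
    + intros; rewrite Rminus_diag; apply sin_0.
    + intros; rewrite Rminus_diag; apply cos_0.
  - destruct (Nat.lt_ge_cases l k) as [Hlt|Hge].
    + destruct (character_sum_zero N (k - l) ltac:(lia)) as [A B].
      split; [rewrite <- A|rewrite <- B]; apply rsum_ext; intros;
        rewrite theta_diff by lia; reflexivity.
    + destruct (character_sum_zero N (l - k) ltac:(lia)) as [A B]. split.
      * rewrite <- A; apply rsum_ext; intros. rewrite <- theta_diff, <- cos_neg by lia.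
        f_equal; ring.
      * rewrite (rsum_ext _ _ (fun j => (-1) * sin (INR j * (2 * PI * INR (l - k) / INR N)))).
        { rewrite rsum_scal, B; ring. }
        intros j Hj. rewrite <- theta_diff by lia.
        replace (theta N j k - theta N j l) with (- (theta N j l - theta N j k)) by ring.
        rewrite sin_neg. ring.
Qed.

Lemma parseval_complex N a b :
  rsum N (fun j => xofz N a b j ^ 2 + yofz N a b j ^ 2) = INR N * rsum N (cabs2 a b).
Proof.
  assert (Hpt : forall j, xofz N a b j ^ 2 + yofz N a b j ^ 2 =
     rsum N (fun k => rsum N (fun l =>
        (a k * a l + b k * b l) * cos (theta N j k - theta N j l)
      + (a k * b l - b k * a l) * sin (theta N j k - theta N j l)))).
  { intros j. rewrite xofz_theta. unfold yofz. rewrite <- !Rsqr_pow2. unfold Rsqr.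
    rewrite !rsum_mult, <- rsum_plus. apply rsum_ext; intros k _.
    rewrite <- rsum_plus. apply rsum_ext; intros l _.
    rewrite cos_minus, sin_minus. ring. }
  rewrite (rsum_ext _ _ _ (fun j _ => Hpt j)), rsum_swap, <- rsum_scal.
  apply rsum_ext; intros k Hk. rewrite rsum_swap.
  rewrite (rsum_ext _ _ (fun l => if (k =? l)%nat then INR N * cabs2 a b l else 0)).
  - rewrite rsum_delta by lia. reflexivity.
  - intros l Hl. rewrite rsum_plus, !rsum_scal.
    destruct (modes_orthogonal N k l Hk Hl) as [-> ->].
    destruct (Nat.eqb_spec k l) as [->|]; unfold cabs2; ring.
Qed.

Lemma yofz_hatR N a b j : (1 <= N)%nat -> hatR N a b -> yofz N a b j = 0.
Proof.
  intros HN [Hb0 Hsym]. unfold yofz. destruct N as [|M]; [lia|].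
  rewrite rsum_shift, theta_0, sin_0, cos_0, Hb0.
  set (h := fun k => a k * sin (theta (S M) j k) + b k * cos (theta (S M) j k)).
  (* pairing k with N - k shows that the sum equals its opposite *)
  assert (E : rsum M (fun k => h (S k)) = - rsum M (fun k => h (S k))).
  { rewrite (rsum_rev M (fun k => h (S k))) at 1.
    rewrite (rsum_ext _ _ (fun k => (-1) * h (S k))); [rewrite rsum_scal; ring|].
    intros i Hi. replace (S (M - 1 - i)) with (S M - S i)%nat by lia.
    destruct (Hsym (S i) ltac:(lia)) as [Ha Hb]. unfold h.
    rewrite theta_reflect, sin_reflect, cos_reflect, <- Ha, Hb by lia.
    replace (S M - (S M - S i))%nat with (S i) by lia. ring. }
  change (a 0%nat * 0 + 0 * 1 + rsum M (fun k => h (S k)) = 0). lra.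
Qed.

Lemma parseval N a b : (1 <= N)%nat -> hatR N a b ->
  rsum N (fun j => xofz N a b j ^ 2) = INR N * rsum N (cabs2 a b).
Proof.
  intros HN H. rewrite <- parseval_complex. apply rsum_ext; intros.
  rewrite yofz_hatR by auto. ring.
Qed.

Lemma parseval_le N a b :
  rsum N (fun j => xofz N a b j ^ 2) <= INR N * rsum N (cabs2 a b).
Proof.
  rewrite <- parseval_complex. apply rsum_le; intros.
  assert (0 <= yofz N a b k ^ 2) by apply pow2_ge_0. lra.
Qed.

Lemma xofz_sup N a b j : Rabs (xofz N a b j) <= rsum N (fun k => sqrt (cabs2 a b k)).
Proof.
  rewrite xofz_theta. eapply Rle_trans; [apply rsum_abs|]. apply rsum_le; intros k _.
  rewrite <- sqrt_Rsqr_abs. apply sqrt_le_1_alt. unfold Rsqr, cabs2.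
  set (c := cos (theta N j k)). set (s := sin (theta N j k)).
  assert (Hcs : s * s + c * c = 1) by (generalize (sin2_cos2 (theta N j k)); unfold Rsqr; fold c s; lra).
  assert (0 <= (a k * s + b k * c) ^ 2) by apply pow2_ge_0. nra.
Qed.

Lemma xofz_minus N a1 b1 a2 b2 j :
  xofz N (fun k => a1 k - a2 k) (fun k => b1 k - b2 k) j = xofz N a1 b1 j - xofz N a2 b2 j.
Proof. rewrite !xofz_theta, <- rsum_minus. apply rsum_ext; intros; ring. Qed.

Lemma xofz_ext N a1 b1 a2 b2 j :
  (forall k, (k < N)%nat -> a1 k = a2 k /\ b1 k = b2 k) -> xofz N a1 b1 j = xofz N a2 b2 j.
Proof.
  intros H. rewrite !xofz_theta. apply rsum_ext; intros k Hk.
  destruct (H k Hk) as [-> ->]. reflexivity.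
Qed.

(** Exact form of the remainder: only the cubic and quartic terms survive. *)

(* Coefficients of z - I_-, i.e. z with its zeroth coefficient increased by 1;
   its transform is x(Nz) + 1. *)
Definition centered (a : nat -> R) (k : nat) : R :=
  if (k =? 0)%nat then a 0%nat + 1 else a k.

Lemma xofz_centered N a b j : (1 <= N)%nat -> xofz N (centered a) b j = xofz N a b j + 1.
Proof.
  intros HN. destruct N as [|M]; [lia|].
  rewrite !xofz_theta, !rsum_shift. unfold centered at 1. simpl Nat.eqb.
  rewrite theta_0, cos_0, sin_0.
  rewrite (rsum_ext _ (fun k => centered a (S k) * _ - _)
                     (fun k => a (S k) * cos (theta (S M) j (S k)) - b (S k) * sin (theta (S M) j (S k))))
    by reflexivity.
  ring.
Qed.

Lemma hatR_centered N a b : hatR N a b -> hatR N (centered a) b.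
Proof.
  intros [H0 H]. split; auto. intros k Hk. destruct (H k Hk) as [A B]. unfold centered.
  destruct (Nat.eqb_spec k 0); [lia|]. destruct (Nat.eqb_spec (N - k) 0); [lia|]. auto.
Qed.

Definition step_phase (N k : nat) : R := 2 * PI * INR k / INR N.

(* Fourier coefficients of the forward difference x_j - x_{j+1}. *)
Definition diff_re (N : nat) (a b : nat -> R) (k : nat) : R :=
  a k * (1 - cos (step_phase N k)) + b k * sin (step_phase N k).
Definition diff_im (N : nat) (a b : nat -> R) (k : nat) : R :=
  b k * (1 - cos (step_phase N k)) - a k * sin (step_phase N k).

Lemma theta_succ N j k : (0 < N)%nat -> theta N (S j) k = theta N j k + step_phase N k.
Proof.
  intros HN. unfold theta, step_phase. rewrite !mult_INR, S_INR.
  assert (0 < INR N) by (apply lt_0_INR; lia). field; lra.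
Qed.

Lemma xofz_periodic N a b : (0 < N)%nat -> xofz N a b N = xofz N a b 0.
Proof.
  intros HN. rewrite !xofz_theta. apply rsum_ext; intros k _.
  assert (E : theta N N k = 0 + 2 * PI * INR k).
  { unfold theta. rewrite mult_INR. assert (0 < INR N) by (apply lt_0_INR; lia). field; lra. }
  rewrite E, sin_period_int, cos_period_int.
  replace (theta N 0 k) with 0; [reflexivity|].
  unfold theta. rewrite Nat.mul_0_l. simpl INR. unfold Rdiv. ring.
Qed.

Lemma xofz_forward_diff N a b i : (i < N)%nat ->
  xofz N a b i - xofz N a b ((i + 1) mod N) = xofz N (diff_re N a b) (diff_im N a b) i.
Proof.
  intros Hi. assert (E : xofz N a b ((i + 1) mod N) = xofz N a b (S i)).
  { destruct (Nat.eq_dec (S i) N) as [Heq|Hne].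
    - replace (i + 1)%nat with N by lia. rewrite Nat.Div0.mod_same, Heq.
      symmetry. apply xofz_periodic; lia.
    - f_equal. rewrite Nat.mod_small; lia. }
  rewrite E, !xofz_theta, <- rsum_minus. apply rsum_ext; intros k _.
  rewrite theta_succ, cos_plus, sin_plus by lia. unfold diff_re, diff_im. ring.
Qed.

Lemma hatR_diff N a b : (0 < N)%nat -> hatR N a b -> hatR N (diff_re N a b) (diff_im N a b).
Proof.
  intros HN [H0 H].
  assert (Hrefl : forall k, (k <= N)%nat -> step_phase N (N - k) = 2 * PI * INR 1 - step_phase N k).
  { intros k Hk. unfold step_phase. rewrite minus_INR by lia. simpl INR.
    assert (0 < INR N) by (apply lt_0_INR; lia). field; lra. }
  split.
  - unfold diff_im, step_phase. rewrite H0. simpl INR.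
    replace (2 * PI * 0 / INR N) with 0 by (unfold Rdiv; ring). rewrite sin_0. ring.
  - intros k Hk. destruct (H k Hk) as [A B]. unfold diff_re, diff_im.
    rewrite (Hrefl k), sin_reflect, cos_reflect, A, B by lia. split; ring.
Qed.

Lemma cabs2_diff N a b k : (0 < N)%nat ->
  cabs2 (diff_re N a b) (diff_im N a b) k = 4 * sin (INR k * PI / INR N) ^ 2 * cabs2 a b k.
Proof.
  intros HN. unfold cabs2, diff_re, diff_im.
  assert (E : step_phase N k = 2 * (INR k * PI / INR N))
    by (unfold step_phase; field; apply not_0_INR; lia).
  rewrite E. set (u := INR k * PI / INR N). rewrite cos_2a_sin, sin_2a.
  assert (Hc := sin2_cos2 u). unfold Rsqr in Hc.
  transitivity (4 * sin u ^ 2 * ((sin u * sin u + cos u * cos u) * (a k ^ 2 + b k ^ 2))); [ring|].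
  rewrite Hc. ring.
Qed.

(* Quadratic part of the on-site term, by Parseval applied to z - I_-. *)
Lemma sum_sq_centered N a b : (1 <= N)%nat -> hatR N a b ->
  rsum N (fun j => (xofz N a b j + 1) ^ 2)
  = INR N * ((a 0%nat + 1) ^ 2
             + rsum N (fun k => if (k =? 0)%nat then 0 else cabs2 a b k)).
Proof.
  intros HN H. pose proof H as [Hb0 _].
  rewrite (rsum_ext _ _ (fun j => xofz N (centered a) b j ^ 2))
    by (intros; rewrite xofz_centered by auto; reflexivity).
  rewrite parseval, rsum_split0 by auto using hatR_centered. f_equal. f_equal.
  - unfold cabs2, centered. simpl. rewrite Hb0. ring.
  - apply rsum_ext; intros k _. unfold cabs2, centered. destruct (Nat.eqb_spec k 0); reflexivity.
Qed.

(* Quadratic coupling term, by Parseval applied to the forward difference. *)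
Lemma sum_sq_differences N a b : (1 <= N)%nat -> hatR N a b ->
  rsum N (fun i => (xofz N a b i - xofz N a b ((i + 1) mod N)) ^ 2)
  = INR N * (4 * rsum N (fun k => if (k =? 0)%nat then 0
                                  else sin (INR k * PI / INR N) ^ 2 * cabs2 a b k)).
Proof.
  intros HN H.
  rewrite (rsum_ext _ _ (fun i => xofz N (diff_re N a b) (diff_im N a b) i ^ 2))
    by (intros; rewrite xofz_forward_diff by auto; reflexivity).
  rewrite parseval, rsum_split0, cabs2_diff by (auto using hatR_diff with arith).
  f_equal. simpl INR. replace (0 * PI / INR N) with 0 by (unfold Rdiv; ring).
  rewrite sin_0, <- rsum_scal. replace (4 * 0 ^ 2 * cabs2 a b 0) with 0 by ring.
  rewrite Rplus_0_l. apply rsum_ext; intros k _.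
  destruct (Nat.eqb_spec k 0); [ring|]. rewrite cabs2_diff by lia. ring.
Qed.

(* The quadratic part of G_N at I_- is exactly the one subtracted in [Rem]. *)
Lemma remainder_identity g N a b : (1 <= N)%nat -> hatR N a b ->
  Rem g N a b
  = / INR N * rsum N (fun j => - (xofz N a b j + 1) ^ 3 + / 4 * (xofz N a b j + 1) ^ 4).
Proof.
  intros HN H. assert (HN0 : INR N <> 0) by (apply not_0_INR; lia).
  unfold Rem, Gt, G, F, nu, lam. set (x := xofz N a b).
  (* Taylor expansion of the on-site potential around -1 *)
  rewrite (rsum_ext _ (fun i => / 4 * x i ^ 4 - / 2 * x i ^ 2)
             (fun i => - / 4 + (x i + 1) ^ 2 + (- (x i + 1) ^ 3 + / 4 * (x i + 1) ^ 4)))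
    by (intros; field).
  rewrite !rsum_plus, rsum_const.
  unfold x. rewrite sum_sq_centered, sum_sq_differences by auto.
  rewrite (rsum_ext _ (fun k => if (k =? 0)%nat then 0 else (-1 + 2 * g * _ + 3) * _)
             (fun k => 2 * (if (k =? 0)%nat then 0 else cabs2 a b k)
                       + 2 * g * (if (k =? 0)%nat then 0
                                  else sin (INR k * PI / INR N) ^ 2 * cabs2 a b k)))
    by (intros k _; destruct (Nat.eqb_spec k 0); ring).
  rewrite rsum_plus, !rsum_scal. field. auto.
Qed.

(** Lower bound on the Hessian eigenvalues nu_{k,N}. *)

Definition circ_dist (N k : nat) : nat := Nat.min k (N - k).

(* sin x >= x/3 on [0, pi/2], from sin x >= x - x^3/6. *)
Lemma sin_ge_third x : 0 <= x <= PI / 2 -> x / 3 <= sin x.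
Proof.
  intros Hx. assert (HPI4 := PI_4).
  destruct (SIN x ltac:(lra) ltac:(lra)) as [H _]. eapply Rle_trans; [|exact H].
  unfold sin_lb, sin_approx, sin_term. cbn [sum_f_R0]. rewrite !INR_IZR_INZ.
  cbn -[pow Rdiv Rmult Rplus Ropp IZR].
  assert (0 <= x ^ 2 <= 4) by (split; nra).
  assert (0 <= x ^ 5 / 120 - x ^ 7 / 5040).
  { replace (x ^ 5 / 120 - x ^ 7 / 5040) with (x ^ 5 * (42 - x ^ 2) / 5040) by field.
    apply Rmult_le_pos; [apply Rmult_le_pos; [apply pow_le|]|]; lra. }
  simpl pow. nra.
Qed.

(* With gamma = mu gamma_1^N, nu_{k,N} = 2 + mu (sin(k pi/N) / sin(pi/N))^2 >= d^2/9,
   d the circular distance of k to 0. *)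
Lemma nu_lower_bound mu N k : 1 < mu -> (3 <= N)%nat -> (1 <= k <= N - 1)%nat ->
  INR (circ_dist N k) ^ 2 / 9 <= nu (mu * gamma1 N) k N.
Proof.
  intros Hmu HN Hk. set (d := circ_dist N k).
  assert (Hd1 : 1 <= INR d) by (apply (le_INR 1); unfold d, circ_dist; lia).
  assert (Hd2 : 2 * INR d <= INR N).
  { change 2 with (INR 2). rewrite <- mult_INR. apply le_INR. unfold d, circ_dist; lia. }
  assert (HN3 : 3 <= INR N) by (apply (le_INR 3) in HN; simpl in HN; lra).
  assert (HPI := PI_RGT_0).
  assert (Es : sin (INR k * PI / INR N) = sin (INR d * PI / INR N)).
  { unfold d, circ_dist. destruct (Nat.le_ge_cases k (N - k)).
    - rewrite Nat.min_l by lia. reflexivity.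
    - rewrite Nat.min_r, minus_INR by lia.
      replace ((INR N - INR k) * PI / INR N) with (PI - INR k * PI / INR N) by (field; lra).
      symmetry; apply sin_PI_x. }
  set (x := INR d * PI / INR N).
  set (s1 := sin (PI / INR N)).
  assert (Hs1 : 0 < s1).
  { apply sin_gt_0; [apply Rdiv_lt_0_compat; lra|].
    apply (Rmult_lt_reg_r (INR N)); [lra|]. field_simplify; nra. }
  assert (Hs1x : s1 < PI / INR N) by (apply sin_lt_x, Rdiv_lt_0_compat; lra).
  assert (Hsx : x / 3 <= sin x).
  { apply sin_ge_third. unfold x. split; [left; apply Rdiv_lt_0_compat; nra|].
    apply (Rmult_le_reg_r (2 * INR N)); [lra|]. field_simplify; nra. }
  assert (Hxs : INR d * s1 <= x).
  { unfold x. replace (INR d * PI / INR N) with (INR d * (PI / INR N)) by (field; lra). nra. }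
  assert (Hratio : INR d / 3 <= sin x / s1).
  { apply (Rmult_le_reg_r s1); [lra|]. field_simplify; lra. }
  unfold nu, lam, gamma1. rewrite Es. fold x.
  replace (-1 + 2 * (mu * / (2 * sin (PI / INR N) ^ 2)) * sin x ^ 2 + 3)
    with (2 + mu * (sin x / s1) ^ 2) by (unfold s1; field; fold s1; lra).
  assert ((INR d / 3) ^ 2 <= (sin x / s1) ^ 2) by (apply pow_incr; lra).
  assert (0 <= (sin x / s1) ^ 2) by apply pow2_ge_0.
  replace (INR d ^ 2 / 9) with ((INR d / 3) ^ 2) by field. nra.
Qed.

(** A dyadic L^4 estimate for transforms with slowly growing coefficients. *)

Definition count (n : nat) (P : nat -> bool) : R := rsum n (fun k => if P k then 1 else 0).

Lemma sum_restricted_le n (P : nat -> bool) (v : nat -> R) c :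
  (forall k, (k < n)%nat -> P k = true -> v k <= c) -> 0 <= c ->
  rsum n (fun k => if P k then v k else 0) <= c * count n P.
Proof.
  intros H Hc. unfold count. rewrite <- rsum_scal. apply rsum_le; intros k Hk.
  destruct (P k) eqn:E; [rewrite Rmult_1_r; auto|lra].
Qed.

Lemma count_lt n B : count n (fun k => (k <? B)%nat) <= INR B.
Proof.
  assert (H : forall n, count n (fun k => (k <? B)%nat) <= INR (Nat.min n B)).
  { unfold count. induction n0; cbn [rsum]; [simpl; lra|].
    destruct (Nat.ltb_spec n0 B).
    - replace (Nat.min (S n0) B) with (S (Nat.min n0 B)) by lia. rewrite S_INR. lra.
    - replace (Nat.min (S n0) B) with (Nat.min n0 B) by lia. lra. }
  eapply Rle_trans; [apply H|]. apply le_INR; lia.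
Qed.

Lemma count_circ_dist_lt N B : count N (fun k => (circ_dist N k <? B)%nat) <= 2 * INR B.
Proof.
  assert (Hrev : count N (fun k => (N - k <? B)%nat) <= INR B).
  { unfold count. rewrite rsum_rev. eapply Rle_trans; [|apply (count_lt N B)].
    apply rsum_le; intros k Hk. replace (N - (N - 1 - k))%nat with (S k) by lia.
    destruct (Nat.ltb_spec (S k) B), (Nat.ltb_spec k B); lia || lra. }
  pose proof (count_lt N B).
  enough (count N (fun k => (circ_dist N k <? B)%nat)
          <= count N (fun k => (k <? B)%nat) + count N (fun k => (N - k <? B)%nat)) by lra.
  unfold count. rewrite <- rsum_plus. apply rsum_le; intros k _. unfold circ_dist.
  destruct (Nat.ltb_spec (Nat.min k (N - k)) B), (Nat.ltb_spec k B), (Nat.ltb_spec (N - k) B);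
    lia || lra.
Qed.

Definition in_block (N m k : nat) : bool :=
  ((circ_dist N k <? 2 ^ S m)%nat && negb (circ_dist N k <? 2 ^ m)%nat)%bool.

Lemma in_block_range N m k : in_block N m k = true -> (2 ^ m <= circ_dist N k < 2 ^ S m)%nat.
Proof.
  unfold in_block. intros H. apply andb_prop in H as [H1 H2].
  apply Nat.ltb_lt in H1. apply Bool.negb_true_iff, Nat.ltb_ge in H2. lia.
Qed.

Lemma count_block N m : count N (in_block N m) <= 4 * 2 ^ m.
Proof.
  assert (H := count_circ_dist_lt N (2 ^ S m)).
  rewrite pow_INR in H. simpl INR in H. replace (1 + 1) with 2 in H by ring.
  replace (4 * 2 ^ m) with (2 * 2 ^ S m) by (simpl; ring).
  eapply Rle_trans; [|exact H]. unfold count, in_block. apply rsum_le; intros k _.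
  destruct (circ_dist N k <? 2 ^ S m)%nat; simpl; [|lra].
  destruct (circ_dist N k <? 2 ^ m)%nat; simpl; lra.
Qed.

Definition lowpass (N m : nat) (f : nat -> R) (k : nat) : R :=
  if (circ_dist N k <? 2 ^ m)%nat then f k else 0.

Definition partial_sum (N : nat) (a b : nat -> R) (m j : nat) : R :=
  xofz N (lowpass N m a) (lowpass N m b) j.

Definition coef_norm (a b : nat -> R) (k : nat) : R := sqrt (cabs2 a b k).

(* l^1 norm of the low frequencies: a bound for the sup norm of [partial_sum]. *)
Definition lowpass_l1 (N : nat) (a b : nat -> R) (m : nat) : R :=
  rsum N (fun k => if (circ_dist N k <? 2 ^ m)%nat then coef_norm a b k else 0).

Definition block_l1 (N : nat) (a b : nat -> R) (m : nat) : R :=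
  rsum N (fun k => if in_block N m k then coef_norm a b k else 0).

Definition block_energy (N : nat) (a b : nat -> R) (m : nat) : R :=
  rsum N (fun k => if in_block N m k then cabs2 a b k else 0).

Lemma pow2_succ m : (2 ^ S m = 2 * 2 ^ m)%nat.
Proof. simpl. lia. Qed.

Lemma partial_sum_sup N a b m j : Rabs (partial_sum N a b m j) <= lowpass_l1 N a b m.
Proof.
  eapply Rle_trans; [apply xofz_sup|]. apply rsum_le; intros k _.
  unfold coef_norm, cabs2, lowpass. destruct (circ_dist N k <? 2 ^ m)%nat; [lra|].
  replace (0 ^ 2 + 0 ^ 2) with 0 by ring. rewrite sqrt_0. lra.
Qed.

(* Since 2^N > N, the N-th partial sum is the whole transform. *)
Lemma partial_sum_full N a b j : partial_sum N a b N j = xofz N a b j.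
Proof.
  apply xofz_ext. intros k Hk. unfold lowpass.
  assert (H := Nat.pow_gt_lin_r 2 N ltac:(lia)).
  destruct (Nat.ltb_spec (circ_dist N k) (2 ^ N)); [auto|]. unfold circ_dist in *. lia.
Qed.

(* Only the frequency 0 lies below 2^0. *)
Lemma lowpass_l1_zero N a b : (1 <= N)%nat -> lowpass_l1 N a b 0 = coef_norm a b 0.
Proof.
  intros HN. unfold lowpass_l1. rewrite rsum_split0 by auto.
  rewrite (rsum_ext _ _ (fun _ => 0)); [rewrite rsum_zero; simpl; ring|].
  intros k Hk. destruct (Nat.eqb_spec k 0); [auto|].
  destruct (Nat.ltb_spec (circ_dist N k) (2 ^ 0)); [|auto]. unfold circ_dist in *. simpl in *. lia.
Qed.

Lemma lowpass_l1_succ N a b m : lowpass_l1 N a b (S m) = lowpass_l1 N a b m + block_l1 N a b m.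
Proof.
  unfold lowpass_l1, block_l1. rewrite <- rsum_plus. apply rsum_ext; intros k _. unfold in_block.
  pose proof (pow2_succ m).
  destruct (Nat.ltb_spec (circ_dist N k) (2 ^ S m)), (Nat.ltb_spec (circ_dist N k) (2 ^ m));
    simpl; try ring. lia.
Qed.

Lemma lowpass_l1_nonneg N a b m : 0 <= lowpass_l1 N a b m.
Proof.
  apply rsum_nonneg; intros. destruct (circ_dist N k <? 2 ^ m)%nat; [apply sqrt_pos|lra].
Qed.

(* Consecutive partial sums differ by the m-th block, whose energy controls them. *)
Lemma partial_sum_increment_l2 N a b m :
  rsum N (fun j => (partial_sum N a b (S m) j - partial_sum N a b m j) ^ 2)
  <= INR N * block_energy N a b m.
Proof.
  unfold partial_sum.
  rewrite (rsum_ext _ _ (fun j => xofz N (fun k => lowpass N (S m) a k - lowpass N m a k)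
                                       (fun k => lowpass N (S m) b k - lowpass N m b k) j ^ 2))
    by (intros; rewrite xofz_minus; reflexivity).
  eapply Rle_trans; [apply parseval_le|]. right. f_equal. apply rsum_ext; intros k _.
  unfold lowpass, in_block, cabs2. pose proof (pow2_succ m).
  destruct (Nat.ltb_spec (circ_dist N k) (2 ^ S m)), (Nat.ltb_spec (circ_dist N k) (2 ^ m));
    simpl; try ring. lia.
Qed.

(* Square-function bound: if the increments u_{m+1}^2 - u_m^2 decay geometrically in L^2
   with ratio r < t < 1, Cauchy-Schwarz with weights t^m controls u_M^2 - u_0^2. *)
Lemma telescoped_square_bound (n M : nat) (u : nat -> nat -> R) (K r t : R) :
  0 <= K -> 0 <= r < t -> t < 1 ->
  (forall m, (m < M)%nat -> rsum n (fun j => (u (S m) j ^ 2 - u m j ^ 2) ^ 2) <= K * r ^ m) ->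
  rsum n (fun j => (u M j ^ 2 - u 0%nat j ^ 2) ^ 2) <= K / ((1 - t) * (1 - r / t)).
Proof.
  intros HK Hr Ht Hinc.
  set (f := fun m j => u (S m) j ^ 2 - u m j ^ 2).
  assert (Hrt : 0 <= r / t < 1).
  { split; [unfold Rdiv; apply Rmult_le_pos; [lra|left; apply Rinv_0_lt_compat; lra]|].
    apply (Rmult_lt_reg_r t); [lra|]. field_simplify; lra. }
  assert (Hweighted : rsum M (fun m => rsum n (fun j => f m j ^ 2 / t ^ m)) <= K / (1 - r / t)).
  { eapply Rle_trans with (rsum M (fun m => K * (r / t) ^ m)).
    - apply rsum_le; intros m Hm. assert (0 < t ^ m) by (apply pow_lt; lra).
      rewrite (rsum_ext _ _ (fun j => / t ^ m * f m j ^ 2)), rsum_scal by (intros; unfold Rdiv; ring).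
      unfold Rdiv. rewrite Rpow_mult_distr, pow_inv.
      replace (K * (r ^ m * / t ^ m)) with (/ t ^ m * (K * r ^ m)) by ring.
      apply Rmult_le_compat_l; [left; apply Rinv_0_lt_compat; lra|apply (Hinc m Hm)].
    - rewrite rsum_scal. unfold Rdiv at 2. apply Rmult_le_compat_l; [lra|].
      apply geometric_sum_bound; lra. }
  assert (Hnn : 0 <= rsum M (fun m => rsum n (fun j => f m j ^ 2 / t ^ m))).
  { apply rsum_nonneg; intros; apply rsum_nonneg; intros.
    unfold Rdiv. apply Rmult_le_pos; [apply pow2_ge_0|left; apply Rinv_0_lt_compat, pow_lt; lra]. }
  eapply Rle_trans with (rsum n (fun j => rsum M (fun m => t ^ m) * rsum M (fun m => f m j ^ 2 / t ^ m))).
  { apply rsum_le; intros j _.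
    rewrite <- (rsum_telescope M (fun m => u m j ^ 2)).
    apply weighted_cauchy_schwarz. intros; apply pow_lt; lra. }
  rewrite rsum_scal, rsum_swap.
  eapply Rle_trans; [apply Rmult_le_compat_r; [exact Hnn|apply geometric_sum_bound; lra]|].
  replace (K / ((1 - t) * (1 - r / t))) with (/ (1 - t) * (K / (1 - r / t)))
    by (field; repeat split; lra).
  apply Rmult_le_compat_l; [left; apply Rinv_0_lt_compat; lra|exact Hweighted].
Qed.

Lemma fourth_moment_telescoped (n M : nat) (u : nat -> nat -> R) (K r t d : R) :
  0 <= K -> 0 <= r < t -> t < 1 ->
  (forall m, (m < M)%nat -> rsum n (fun j => (u (S m) j ^ 2 - u m j ^ 2) ^ 2) <= K * r ^ m) ->
  (forall j, Rabs (u 0%nat j) <= d) ->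
  rsum n (fun j => u M j ^ 4) <= 2 * (K / ((1 - t) * (1 - r / t))) + 2 * INR n * d ^ 4.
Proof.
  intros HK Hr Ht Hinc Hd.
  assert (Hsq := telescoped_square_bound n M u K r t HK Hr Ht Hinc).
  eapply Rle_trans with (rsum n (fun j => 2 * (u M j ^ 2 - u 0%nat j ^ 2) ^ 2 + 2 * d ^ 4)).
  - apply rsum_le; intros j _. set (x := u M j). set (y := u 0%nat j).
    assert (Hy2 : y ^ 2 <= d ^ 2).
    { rewrite <- (pow2_abs y). apply pow_incr. split; [apply Rabs_pos|apply Hd]. }
    assert (0 <= y ^ 2) by apply pow2_ge_0.
    assert (y ^ 4 <= d ^ 4).
    { replace (y ^ 4) with ((y ^ 2) ^ 2) by ring. replace (d ^ 4) with ((d ^ 2) ^ 2) by ring.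
      apply pow_incr; lra. }
    assert (0 <= (x ^ 2 - 2 * y ^ 2) ^ 2) by apply pow2_ge_0. nra.
  - rewrite rsum_plus, rsum_scal, rsum_const. lra.
Qed.

(* Constants of the dyadic estimate, for a growth ratio q > 1 with q^4 < 2. *)
Definition l1_growth (q : R) : R := 4 * q / (q - 1) + 1.
Definition decay (q : R) : R := q ^ 4 / 2.
Definition cs_ratio (q : R) : R := (decay q + 1) / 2.
Definition L4_const (q : R) : R :=
  2 * (16 * l1_growth q ^ 2 * q ^ 4 / ((1 - cs_ratio q) * (1 - decay q / cs_ratio q))) + 2.

Lemma decay_lt_cs_ratio q : 0 <= q -> q ^ 4 < 2 -> 0 <= decay q < cs_ratio q /\ cs_ratio q < 1.
Proof. intros Hq H. unfold cs_ratio, decay. assert (0 <= q ^ 4) by (apply pow_le; lra). lra. Qed.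

Section DyadicL4.

Variables (N : nat) (a b : nat -> R) (B q : R).
Hypothesis HN : (1 <= N)%nat.
Hypothesis Hq : 1 < q.
Hypothesis Hzero : coef_norm a b 0 <= B.
Hypothesis Hblock : forall m k, (k < N)%nat -> in_block N m k = true ->
  coef_norm a b k <= B * q ^ S m / 2 ^ m.

Lemma B_nonneg : 0 <= B.
Proof. eapply Rle_trans; [apply sqrt_pos|exact Hzero]. Qed.

Lemma block_coef_bound_nonneg m : 0 <= B * q ^ S m / 2 ^ m.
Proof.
  pose proof B_nonneg. assert (0 < q ^ S m) by (apply pow_lt; lra).
  assert (0 < 2 ^ m) by (apply pow_lt; lra).
  unfold Rdiv. apply Rmult_le_pos; [nra|left; apply Rinv_0_lt_compat; lra].
Qed.

(* Block sizes 4 * 2^m turn the pointwise bound into l^1 and energy bounds. *)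
Lemma block_l1_bound m : block_l1 N a b m <= 4 * B * q ^ S m.
Proof.
  eapply Rle_trans;
    [apply (sum_restricted_le N (in_block N m) (coef_norm a b) (B * q ^ S m / 2 ^ m));
      [apply Hblock|apply block_coef_bound_nonneg]|].
  eapply Rle_trans; [apply Rmult_le_compat_l; [apply block_coef_bound_nonneg|apply count_block]|].
  right. assert (0 < 2 ^ m) by (apply pow_lt; lra). field. lra.
Qed.

Lemma block_energy_bound m : block_energy N a b m <= 4 * B ^ 2 * (q ^ S m) ^ 2 / 2 ^ m.
Proof.
  eapply Rle_trans;
    [apply (sum_restricted_le N (in_block N m) (cabs2 a b) ((B * q ^ S m / 2 ^ m) ^ 2))|].
  - intros k Hk Hi. assert (H := Hblock m k Hk Hi). unfold coef_norm in H.
    assert (0 <= cabs2 a b k) by (unfold cabs2; nra).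
    rewrite <- (pow2_sqrt (cabs2 a b k)) by auto. apply pow_incr. split; [apply sqrt_pos|exact H].
  - apply pow2_ge_0.
  - eapply Rle_trans; [apply Rmult_le_compat_l; [apply pow2_ge_0|apply count_block]|].
    right. assert (0 < 2 ^ m) by (apply pow_lt; lra). field. lra.
Qed.

Lemma lowpass_l1_bound m : lowpass_l1 N a b m <= l1_growth q * B * q ^ m.
Proof.
  pose proof B_nonneg.
  assert (HD : 1 <= l1_growth q).
  { unfold l1_growth. assert (0 < 4 * q / (q - 1)) by (apply Rdiv_lt_0_compat; lra). lra. }
  induction m as [|m IH].
  - rewrite lowpass_l1_zero by exact HN. simpl. nra.
  - rewrite lowpass_l1_succ. pose proof (block_l1_bound m). simpl pow in *.
    assert (0 < q ^ m) by (apply pow_lt; lra).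
    assert (l1_growth q * (q - 1) = 4 * q + (q - 1)) by (unfold l1_growth; field; lra).
    assert (0 <= B * q ^ m) by nra. nra.
Qed.

Lemma squared_increment_bound m :
  rsum N (fun j => (partial_sum N a b (S m) j ^ 2 - partial_sum N a b m j ^ 2) ^ 2)
  <= INR N * (16 * l1_growth q ^ 2 * B ^ 4 * q ^ 4) * decay q ^ m.
Proof.
  set (P := lowpass_l1 N a b (S m) + lowpass_l1 N a b m).
  assert (HP : P <= 2 * l1_growth q * B * q ^ S m).
  { unfold P. pose proof (lowpass_l1_bound (S m)). pose proof (lowpass_l1_bound m).
    pose proof B_nonneg. assert (0 < q ^ m) by (apply pow_lt; lra).
    assert (0 < l1_growth q).
    { unfold l1_growth. assert (0 < 4 * q / (q - 1)) by (apply Rdiv_lt_0_compat; lra). lra. }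
    assert (l1_growth q * B * q ^ m <= l1_growth q * B * q ^ S m).
    { apply Rmult_le_compat_l; [nra|]. simpl. nra. }
    lra. }
  assert (HPn : 0 <= P)
    by (unfold P; pose proof (lowpass_l1_nonneg N a b (S m)); pose proof (lowpass_l1_nonneg N a b m); lra).
  (* x^2 - y^2 = (x + y)(x - y), and |x + y| <= P pointwise *)
  eapply Rle_trans with
    (P ^ 2 * rsum N (fun j => (partial_sum N a b (S m) j - partial_sum N a b m j) ^ 2)).
  { rewrite <- rsum_scal. apply rsum_le; intros j _.
    pose proof (partial_sum_sup N a b (S m) j). pose proof (partial_sum_sup N a b m j).
    set (x := partial_sum N a b (S m) j) in *. set (y := partial_sum N a b m j) in *.
    assert (Rabs (x + y) <= P) by (unfold P; eapply Rle_trans; [apply Rabs_triang|lra]).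
    assert ((x + y) ^ 2 <= P ^ 2).
    { rewrite <- (pow2_abs (x + y)). apply pow_incr. split; [apply Rabs_pos|auto]. }
    replace ((x ^ 2 - y ^ 2) ^ 2) with ((x + y) ^ 2 * (x - y) ^ 2) by ring.
    apply Rmult_le_compat_r; [apply pow2_ge_0|auto]. }
  eapply Rle_trans; [apply Rmult_le_compat_l; [apply pow2_ge_0|apply partial_sum_increment_l2]|].
  assert (HE := block_energy_bound m).
  assert (0 <= INR N) by apply pos_INR.
  assert (P ^ 2 <= (2 * l1_growth q * B * q ^ S m) ^ 2) by (apply pow_incr; lra).
  assert (0 <= block_energy N a b m)
    by (apply rsum_nonneg; intros; destruct (in_block N m k); [unfold cabs2; nra|lra]).
  eapply Rle_trans.
  { apply Rmult_le_compat; [apply pow2_ge_0|apply Rmult_le_pos; auto|eassumption|].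
    apply Rmult_le_compat_l; [auto|exact HE]. }
  assert (0 < 2 ^ m) by (apply pow_lt; lra).
  assert (E : decay q ^ m = (q ^ m) ^ 4 / 2 ^ m).
  { unfold decay, Rdiv. rewrite Rpow_mult_distr, pow_inv, <- !pow_mult, Nat.mul_comm. reflexivity. }
  right. rewrite E. change (q ^ S m) with (q * q ^ m). field. lra.
Qed.

Lemma dyadic_L4_bound : q ^ 4 < 2 ->
  rsum N (fun j => xofz N a b j ^ 4) <= INR N * L4_const q * B ^ 4.
Proof.
  intros Hq4. destruct (decay_lt_cs_ratio q ltac:(lra) Hq4) as [Hr Ht].
  rewrite (rsum_ext _ _ (fun j => partial_sum N a b N j ^ 4))
    by (intros; rewrite partial_sum_full; reflexivity).
  pose proof B_nonneg. assert (0 <= INR N) by apply pos_INR.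
  assert (HK : 0 <= INR N * (16 * l1_growth q ^ 2 * B ^ 4 * q ^ 4)).
  { apply Rmult_le_pos; [auto|]. assert (0 <= B ^ 4) by (apply pow_le; lra).
    assert (0 <= q ^ 4) by (apply pow_le; lra). assert (0 <= l1_growth q ^ 2) by apply pow2_ge_0.
    apply Rmult_le_pos; [apply Rmult_le_pos|]; [apply Rmult_le_pos| |]; lra. }
  eapply Rle_trans; [apply (fourth_moment_telescoped N N (partial_sum N a b) _ (decay q) (cs_ratio q) B HK Hr)|].
  - tauto.
  - intros m _. apply squared_increment_bound.
  - intros j. eapply Rle_trans; [apply partial_sum_sup|]. rewrite lowpass_l1_zero; auto.
  - right. unfold L4_const.
    assert (0 < cs_ratio q) by lra.
    assert (decay q / cs_ratio q < 1) by (apply (Rmult_lt_reg_r (cs_ratio q)); [lra|]; field_simplify; lra).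
    field. repeat split; lra.
Qed.

End DyadicL4.

(** Coefficient decay on C_delta(I_-) and the final estimate. *)

Lemma Rpower_pos x y : 0 < Rpower x y.
Proof. unfold Rpower; apply exp_pos. Qed.

Lemma Rpower_2_gt1 alpha : 0 < alpha -> 1 < Rpower 2 alpha.
Proof. intros H. rewrite <- (Rpower_O 2) by lra. apply Rpower_lt; lra. Qed.

Lemma Rpower_2_pow4 alpha : alpha < / 4 -> Rpower 2 alpha ^ 4 < 2.
Proof.
  intros H. rewrite <- Rpower_pow, Rpower_mult by apply Rpower_pos.
  rewrite <- (Rpower_1 2) at 2 by lra. apply Rpower_lt; [lra|]. simpl INR. lra.
Qed.

Lemma Rpower_pow2 alpha n : Rpower (2 ^ n) alpha = Rpower 2 alpha ^ n.
Proof.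
  rewrite <- (Rpower_pow n 2), Rpower_mult, Rmult_comm, <- Rpower_mult by lra.
  apply Rpower_pow, Rpower_pos.
Qed.

Lemma INR_pow2 m : INR (2 ^ m) = 2 ^ m.
Proof. rewrite pow_INR. reflexivity. Qed.

(* On C_delta(I_-), |z_k| <= delta r_k / sqrt(nu_k) <= 12 delta q^(m+1) / 2^m on the m-th
   dyadic block, since r_k <= 4 q^(m+1) and sqrt(nu_k) >= 2^m / 3. *)
Lemma Cdelta_block_bound mu alpha delta N a b m k :
  1 < mu -> 0 < alpha -> (3 <= N)%nat -> 0 < delta ->
  Cdelta (mu * gamma1 N) alpha delta N a b -> (k < N)%nat -> in_block N m k = true ->
  coef_norm (centered a) b k <= 12 * delta * Rpower 2 alpha ^ S m / 2 ^ m.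
Proof.
  intros Hmu Hal HN Hd [_ [_ Hk]] HkN Hi.
  destruct (in_block_range N m k Hi) as [Hlo Hhi].
  assert (Hk0 : k <> 0%nat) by (intro; subst; unfold circ_dist in Hlo; simpl in Hlo;
                                 assert (H := Nat.pow_nonzero 2 m); lia).
  assert (Hk1 : (1 <= k <= N - 1)%nat) by lia.
  replace (coef_norm (centered a) b k) with (sqrt (cabs2 a b k))
    by (unfold coef_norm, cabs2, centered; apply Nat.eqb_neq in Hk0; rewrite Hk0; reflexivity).
  eapply Rle_trans; [apply (Hk k Hk1)|].
  set (d := circ_dist N k) in *.
  assert (Hdm : 2 ^ m <= INR d) by (rewrite <- INR_pow2; apply le_INR; lia).
  assert (H2m : 0 < 2 ^ m) by (apply pow_lt; lra).
  assert (Hr : Rpower (INR d) alpha <= Rpower 2 alpha ^ S m).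
  { rewrite <- Rpower_pow2. apply Rle_Rpower_l; [lra|]. split; [lra|].
    rewrite <- INR_pow2. apply le_INR; lia. }
  assert (Hnu : INR d / 3 <= sqrt (nu (mu * gamma1 N) k N)).
  { rewrite <- (sqrt_pow2 (INR d / 3)) by lra. apply sqrt_le_1_alt.
    replace ((INR d / 3) ^ 2) with (INR d ^ 2 / 9) by field. apply nu_lower_bound; auto. }
  unfold rr, rho. fold (circ_dist N k). fold d.
  pose proof (Rpower_pos (INR d) alpha).
  unfold Rdiv. rewrite Rmult_assoc.
  replace (12 * delta * Rpower 2 alpha ^ S m * / 2 ^ m)
    with (delta * ((4 * Rpower 2 alpha ^ S m) * / (2 ^ m / 3))) by (field; lra).
  apply Rmult_le_compat_l; [lra|].
  apply Rmult_le_compat; [lra|left; apply Rinv_0_lt_compat; lra|lra|].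
  apply Rinv_le_contravar; lra.
Qed.

(* On C_delta(I_-), |z_0 + 1| <= delta / sqrt 2. *)
Lemma Cdelta_zero_bound gamma alpha delta N a b :
  0 < delta -> Cdelta gamma alpha delta N a b -> coef_norm (centered a) b 0 <= 12 * delta.
Proof.
  intros Hd [[Hb0 _] [H0 _]]. unfold coef_norm, cabs2, centered. simpl. rewrite Hb0.
  replace ((a 0%nat + 1) * ((a 0%nat + 1) * 1) + 0 * (0 * 1)) with (Rsqr (a 0%nat + 1))
    by (unfold Rsqr; ring).
  rewrite sqrt_Rsqr_abs. eapply Rle_trans; [exact H0|].
  assert (1 <= sqrt 2) by (rewrite <- sqrt_1; apply sqrt_le_1_alt; lra).
  apply (Rmult_le_reg_r (sqrt 2)); [lra|]. field_simplify; nra.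
Qed.

(* |-y^3 + y^4/4| <= (3/(4d) + 1/4) y^4 + d^3/4, by Young's inequality y^3 d <= 3y^4/4 + d^4/4. *)
Lemma cubic_quartic_bound y d : 0 < d ->
  Rabs (- y ^ 3 + / 4 * y ^ 4) <= (3 / (4 * d) + / 4) * y ^ 4 + d ^ 3 / 4.
Proof.
  intros Hd. set (v := Rabs y). assert (Hv : 0 <= v) by apply Rabs_pos.
  assert (E3 : Rabs (y ^ 3) = v ^ 3) by (unfold v; rewrite <- RPow_abs; reflexivity).
  assert (E4 : y ^ 4 = v ^ 4).
  { replace (y ^ 4) with ((y ^ 2) ^ 2) by ring. replace (v ^ 4) with ((v ^ 2) ^ 2) by ring.
    unfold v. rewrite pow2_abs. reflexivity. }
  eapply Rle_trans; [apply Rabs_triang|].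
  rewrite Rabs_Ropp, E3, Rabs_mult, Rabs_pos_eq, Rabs_pos_eq, E4 by (rewrite ?E4; lra || apply pow_le; auto).
  assert (Hyoung : v ^ 3 * d <= 3 / 4 * v ^ 4 + d ^ 4 / 4).
  { assert (0 <= (v - d) ^ 2 * (3 * v ^ 2 + 2 * v * d + d ^ 2))
      by (apply Rmult_le_pos; [apply pow2_ge_0|nra]).
    nra. }
  assert (v ^ 3 <= 3 / (4 * d) * v ^ 4 + d ^ 3 / 4).
  { apply (Rmult_le_reg_r d); [auto|].
    replace ((3 / (4 * d) * v ^ 4 + d ^ 3 / 4) * d) with (3 / 4 * v ^ 4 + d ^ 4 / 4) by (field; lra).
    auto. }
  lra.
Qed.

Lemma mean_cubic_quartic_bound n (y : nat -> R) C d : (1 <= n)%nat -> 0 < d <= 1 ->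
  rsum n (fun j => y j ^ 4) <= INR n * C * d ^ 4 ->
  Rabs (/ INR n * rsum n (fun j => - y j ^ 3 + / 4 * y j ^ 4)) <= (C + / 4) * d ^ 3.
Proof.
  intros Hn Hd HL4.
  assert (Hnr : 0 < INR n) by (apply lt_0_INR; lia).
  assert (Hd3 : 0 < d ^ 3) by (apply pow_lt; lra).
  assert (Hd4 : d ^ 4 <= d ^ 3) by (replace (d ^ 4) with (d * d ^ 3) by ring; nra).
  assert (Hpos4 : forall x, 0 <= x ^ 4)
    by (intros x; replace (x ^ 4) with ((x ^ 2) ^ 2) by ring; apply pow2_ge_0).
  assert (HC : 0 <= C).
  { assert (0 <= rsum n (fun j => y j ^ 4)) by (apply rsum_nonneg; auto).
    assert (0 < INR n * d ^ 4) by (apply Rmult_lt_0_compat; [lra|apply pow_lt; lra]).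
    nra. }
  assert (Hsum : Rabs (rsum n (fun j => - y j ^ 3 + / 4 * y j ^ 4))
                 <= (3 / (4 * d) + / 4) * (INR n * C * d ^ 4) + INR n * (d ^ 3 / 4)).
  { eapply Rle_trans; [apply rsum_abs|].
    eapply Rle_trans with (rsum n (fun j => (3 / (4 * d) + / 4) * y j ^ 4 + d ^ 3 / 4)).
    - apply rsum_le; intros j _. apply cubic_quartic_bound; lra.
    - rewrite rsum_plus, rsum_scal, rsum_const.
      assert (0 < 3 / (4 * d)) by (apply Rdiv_lt_0_compat; lra).
      apply Rplus_le_compat_r, Rmult_le_compat_l; lra. }
  rewrite Rabs_mult, Rabs_pos_eq by (left; apply Rinv_0_lt_compat; lra).
  apply (Rmult_le_reg_l (INR n)); [lra|].
  rewrite <- Rmult_assoc, Rinv_r, Rmult_1_l by lra.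
  eapply Rle_trans; [exact Hsum|].
  replace ((3 / (4 * d) + / 4) * (INR n * C * d ^ 4) + INR n * (d ^ 3 / 4))
    with (INR n * (3 / 4 * C * d ^ 3 + / 4 * C * d ^ 4 + / 4 * d ^ 3)) by (simpl; field; lra).
  apply Rmult_le_compat_l; [lra|]. nra.
Qed.

Theorem lemma4p11 :
  forall (mu alpha : R), 1 < mu -> 0 < alpha < / 4 ->
  exists (A9 delta0 : R), 0 < delta0 /\
    forall (N : nat) (delta : R) (a b : nat -> R),
      (3 <= N)%nat -> 0 < delta < delta0 ->
      Cdelta (mu * gamma1 N) alpha delta N a b ->
      Rabs (Rem (mu * gamma1 N) N a b) <= A9 * delta ^ 3.
Proof.
  intros mu alpha Hmu Hal. set (q := Rpower 2 alpha).
  exists (L4_const q * 12 ^ 4 + / 4), 1. split; [lra|].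
  intros N delta a b HN Hd HC.
  assert (HN1 : (1 <= N)%nat) by lia.
  assert (HL4 : rsum N (fun j => (xofz N a b j + 1) ^ 4)
                <= INR N * (L4_const q * 12 ^ 4) * delta ^ 4).
  { rewrite (rsum_ext _ _ (fun j => xofz N (centered a) b j ^ 4))
      by (intros; rewrite xofz_centered by exact HN1; reflexivity).
    eapply Rle_trans; [apply (dyadic_L4_bound N (centered a) b (12 * delta) q HN1)|].
    - apply Rpower_2_gt1; lra.
    - apply (Cdelta_zero_bound (mu * gamma1 N) alpha delta N); [lra|exact HC].
    - intros m k Hk Hi.
      apply (Cdelta_block_bound mu alpha delta N); auto; lra.
    - apply Rpower_2_pow4; lra.
    - right. ring. }
  rewrite remainder_identity by (auto; apply HC).
  apply mean_cubic_quartic_bound; auto; lra.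
Qed.
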